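(* Let $k,a,b$ be integers with $k<a<b$. Let $G$ be a bipartite graph with classes $A=\{v_1,v_2,\dots,v_a\}$ and $B$, where $|B|=b$ and every vertex of $A$ has degree at least $b-k$ in $G$. Then for any non-negative integers $c_1,\dots,c_a$ with $\sum_{i=1}^a c_i \le b-k$, $G$ contains a star forest (a subgraph consisting of vertex-disjoint stars) in which, for every $i$, the vertex $v_i$ is the center of a star with exactly $c_i$ leaves (all leaves lying in $B$). *)

From mathcomp Require Import all_boot all_order all_algebra.
Set Implicit Arguments. Unset Strict Implicit. Unset Printing Implicit Defensive.

(* A bipartite graph with classes A = 'I_a (vertex v_i = i) and B = 'I_b is
   given by its edge relation E : 'I_a -> 'I_b -> bool. *)

Definition nbhd (a b : nat) (E : 'I_a -> 'I_b -> bool) (i : 'I_a) : {set 'I_b} :=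
  [set y | E i y].

Definition degA (a b : nat) (E : 'I_a -> 'I_b -> bool) (i : 'I_a) : nat :=
  #|nbhd E i|.

(* Leaves are neighbours of their center (edges of G); the stars
   are vertex-disjoint: distinct centers, leaf sets pairwise disjoint, and
   leaves (in B) are never centers (in A). *)
Definition has_star_forest (a b : nat) (E : 'I_a -> 'I_b -> bool) (c : 'I_a -> nat) : Prop :=
  exists S : 'I_a -> {set 'I_b},
    [/\ forall i, S i \subset nbhd E i,
        forall i, #|S i| = c i
      & forall i j, i != j -> [disjoint S i & S j]].

From mathcomp Require Import all_boot all_order all_algebra.
Set Implicit Arguments. Unset Strict Implicit. Unset Printing Implicit Defensive.
Import Order.TTheory GRing.Theory Num.Theory.

(* The stars are chosen greedily, one center at a time.  When the center x is
   reached, the leaves already used number at most the sum of the earlier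
   demands, so the at least (sum of all demands) neighbours of x leave at
   least c x unused ones to serve as its leaves. *)

Lemma ex_subset_card (T : finType) (D : {set T}) (n : nat) :
  n <= #|D| -> exists2 X : {set T}, X \subset D & #|X| = n.
Proof.
case/card_geqP=> s [uniq_s size_s sub_sD].
exists [set x in s]; last by rewrite cardsE (card_uniqP uniq_s).
by apply/subsetP=> x; rewrite inE => /sub_sD.
Qed.

Lemma leq_card_bigcup (I T : finType) (s : seq I) (S : I -> {set T}) :
  #|\bigcup_(j <- s) S j| <= \sum_(j <- s) #|S j|.
Proof.
elim: s => [|j s IHs]; first by rewrite !big_nil cards0.
rewrite !big_cons; apply: leq_trans (leq_card_setU _ _).1 _.
by rewrite leq_add2l.
Qed.

Section GreedyStars.

Variables (I T : finType) (N : I -> {set T}) (c : I -> nat).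

Definition star_family (s : seq I) (S : I -> {set T}) : Prop :=
  [/\ {in s, forall i, S i \subset N i},
      {in s, forall i, #|S i| = c i}
    & {in s &, forall i j, i != j -> [disjoint S i & S j]}].

Lemma star_family_extend (s : seq I) (S : I -> {set T}) (x : I) :
  {in s, forall i, #|S i| = c i} -> c x + \sum_(j <- s) c j <= #|N x| ->
  exists2 X : {set T}, X \subset N x :\: \bigcup_(j <- s) S j & #|X| = c x.
Proof.
move=> cardS sum_le; apply: ex_subset_card.
set U := \bigcup_(j <- s) S j.
have cardU : #|U| <= \sum_(j <- s) c j.
  apply: leq_trans (leq_card_bigcup s S) (eq_leq _).
  by rewrite !big_seq; apply: eq_bigr => j /cardS.
rewrite cardsD leq_subRL ?subset_leq_card ?subsetIl //.
apply: leq_trans sum_le; rewrite addnC leq_add2l.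
by apply: leq_trans cardU; rewrite subset_leq_card ?subsetIr.
Qed.

Lemma greedy_star_family (s : seq I) :
  {in s, forall i, \sum_(j <- s) c j <= #|N i|} ->
  exists S, star_family s S.
Proof.
elim: s => [|x s IHs]; first by exists (fun=> set0); split=> ?.
rewrite big_cons => sum_le.
have [S [subN cardS disjS]] : exists S, star_family s S.
  apply: IHs => i i_s; apply: leq_trans (sum_le i _); last exact: mem_behead.
  exact: leq_addl.
have [X /subsetP sub_X cardX] := star_family_extend cardS
  (sum_le x (mem_head x s)).
have disjX j : j \in s -> [disjoint X & S j].
  move=> j_s; rewrite disjoints_subset; apply/subsetP=> y /sub_X.
  rewrite !inE bigcup_seq => /andP[y_notin_U _]; apply: contra y_notin_U.
  by move=> y_Sj; apply/bigcupP; exists j.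
exists (fun j => if j == x then X else S j); split.
- move=> i; rewrite inE; case: eqP => [-> _|_ /= i_s]; last exact: subN.
  by apply/subsetP=> y /sub_X /setDP[].
- by move=> i; rewrite inE; case: eqP => [->|_ /=] //; apply: cardS.
- move=> i j; rewrite !inE.
  case: (eqVneq i x) => [->|i_x]; case: (eqVneq j x) => [->|j_x] //= i_s j_s ij.
  + exact: disjX.
  + by rewrite disjoint_sym; apply: disjX.
  + exact: disjS.
Qed.

End GreedyStars.

Theorem claim9 (k : int) (a b : nat) (hka : (k < a%:Z)%R) (hab : (a < b)%N)
  (E : 'I_a -> 'I_b -> bool)
  (hdeg : forall i : 'I_a, (b%:Z - k <= (degA E i)%:Z)%R)
  (c : 'I_a -> nat)
  (hc : ((\sum_(i < a) c i)%N%:Z <= b%:Z - k)%R) :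
  has_star_forest E c.
Proof.
(* Only the degree and demand bounds matter. *)
have sum_le i : i \in enum 'I_a -> \sum_(j <- enum 'I_a) c j <= #|nbhd E i|.
  by move=> _; rewrite big_enum /=; have := le_trans hc (hdeg i); rewrite lez_nat.
have [S [subN cardS disjS]] := greedy_star_family sum_le.
by exists S; split=> [i|i|i j]; [apply: subN|apply: cardS|apply: disjS];
  rewrite ?mem_enum.
Qed.
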